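(* Let $\mathcal{O}$ be a small category and $\psi\colon\mathcal{O}\to\mathrm{Cat}$ a contravariant functor. Then the counit $\epsilon\colon FE\psi\to\psi$ of the adjunction $(F,E)$ is an objectwise weak equivalence, i.e., $\epsilon\colon(FE\psi)(b)\to\psi(b)$ is a weak equivalence of categories for every object $b$ of $\mathcal{O}$.
   Context: $\mathrm{Cat}$ is the category of small categories; a functor is a weak equivalence if its nerve is a weak equivalence of simplicial sets. $\mathrm{Cat}{\downarrow}\mathcal{O}$ is the category of small categories over $\mathcal{O}$. $F\colon\mathrm{Cat}{\downarrow}\mathcal{O}\to(\text{contravariant functors }\mathcal{O}\to\mathrm{Cat})$ sends $\phi\colon\mathcal{C}\to\mathcal{O}$ to $F\phi$ with $(F\phi)(b)$ the pullback of $\mathcal{C}\xrightarrow{\phi}\mathcal{O}\leftarrow b{\downarrow}\mathcal{O}$ (the comma category of objects under $b$, with its forgetful functor), contravariantly functorial in $b$ via precomposition $c{\downarrow}\mathcal{O}\to b{\downarrow}\mathcal{O}$ with $\beta\colon b\to c$. Its right adjoint $E$ is the Grothendieck construction: for contravariant $\psi\colon\mathcal{O}\to\mathrm{Cat}$, $E\psi\colon\bar E\psi\to\mathcal{O}$ where $\bar E\psi$ has objects the disjoint union of the objects of all $\psi(b)$ (an object of $\psi(b)$ mapping to $b$), a morphism from $x\in\psi(b)$ to $y\in\psi(c)$ is a pair $(\beta,f)$ with $\beta\colon b\to c$ and $f\colon x\to\beta^*y$ in $\psi(b)$, and composition $(\beta,f)\circ(\gamma,g)=(\beta\gamma,\gamma^*f\circ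 g)$. *)

From Stdlib Require Import Relation_Operators Eqdep.
From mathcomp Require Import all_boot.

Set Implicit Arguments.
Unset Strict Implicit.
Unset Printing Implicit Defensive.

Record Cat := MkCat {
  Ob : Type;
  Hom : Ob -> Ob -> Type;
  idm : forall x, Hom x x;
  cmp : forall x y z, Hom y z -> Hom x y -> Hom x z }.
Arguments Hom {c} _ _.
Arguments idm {c} x.
Arguments cmp {c x y z} _ _.

Definition is_cat (C : Cat) : Prop :=
  (forall (x y : Ob C) (f : Hom x y), cmp f (idm x) = f) /\
  (forall (x y : Ob C) (f : Hom x y), cmp (idm y) f = f) /\
  (forall (w x y z : Ob C) (f : Hom w x) (g : Hom x y) (h : Hom y z),
      cmp h (cmp g f) = cmp (cmp h g) f).

Record Functor (C D : Cat) := MkFunctor {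
  fobj : Ob C -> Ob D;
  fmap : forall x y : Ob C, Hom x y -> Hom (fobj x) (fobj y) }.
Arguments fobj {C D} f _.
Arguments fmap {C D} f {x y} _.

Definition is_functor (C D : Cat) (F : Functor C D) : Prop :=
  (forall x : Ob C, fmap F (idm x) = idm (fobj F x)) /\
  (forall (x y z : Ob C) (g : Hom y z) (f : Hom x y),
      fmap F (cmp g f) = cmp (fmap F g) (fmap F f)).

(* Total space of morphisms: used to state equality of morphisms whose
   endpoints are only propositionally equal. *)
Definition THom (C : Cat) := {x : Ob C & {y : Ob C & Hom x y}}.
Definition pk (C : Cat) (x y : Ob C) (f : Hom x y) : THom C :=
  existT _ x (existT _ y f).

Definition castT (C : Cat) (x y y' : Ob C) (e : y = y') (f : Hom x y) : Hom x y' :=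
  eq_rect y (fun z => Hom x z) f y' e.

Lemma pk_cmp_congr (C : Cat) (x y z x' y' z' : Ob C)
  (f : Hom x y) (g : Hom y z) (f' : Hom x' y') (g' : Hom y' z') :
  pk f = pk f' -> pk g = pk g' -> pk (cmp g f) = pk (cmp g' f').
Proof.
rewrite /pk => H1 H2.
move: (projT1_eq H1) => /= E1; subst x'.
apply inj_pair2 in H1.
move: (projT1_eq H1) => /= E2; subst y'.
apply inj_pair2 in H1; subst f'.
apply inj_pair2 in H2.
move: (projT1_eq H2) => /= E3; subst z'.
apply inj_pair2 in H2; subst g'.
by [].
Qed.

(* The object part of functoriality is recorded in the structure       *)
(* (it is needed to define the Grothendieck construction); the         *)
(* remaining laws are in the predicate is_cfun.                        *)

Record CFun (O : Cat) := MkCFun {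
  cob : Ob O -> Cat;
  cmor : forall b c : Ob O, Hom b c -> Functor (cob c) (cob b);
  cmor_id_ob : forall (b : Ob O) (y : Ob (cob b)), fobj (cmor (idm b)) y = y;
  cmor_cmp_ob : forall (b c d : Ob O) (beta : Hom c d) (gamma : Hom b c)
      (y : Ob (cob d)),
      fobj (cmor (cmp beta gamma)) y = fobj (cmor gamma) (fobj (cmor beta) y) }.
Arguments cob {O} c _ : rename.
Arguments cmor {O} psi {b c} _ : rename.
Arguments cmor_id_ob {O} psi {b} y : rename.
Arguments cmor_cmp_ob {O} psi {b c d} beta gamma y : rename.

Definition is_cfun (O : Cat) (psi : CFun O) : Prop :=
  (forall b : Ob O, is_cat (cob psi b)) /\
  (forall (b c : Ob O) (beta : Hom b c), is_functor (cmor psi beta)) /\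
  (forall (b : Ob O) (x y : Ob (cob psi b)) (f : Hom x y),
      pk (fmap (cmor psi (idm b)) f) = pk f) /\
  (forall (b c d : Ob O) (beta : Hom c d) (gamma : Hom b c)
      (x y : Ob (cob psi d)) (f : Hom x y),
      pk (fmap (cmor psi (cmp beta gamma)) f)
      = pk (fmap (cmor psi gamma) (fmap (cmor psi beta) f))).

Section Groth.
Variables (O : Cat) (psi : CFun O).

Definition GOb := {b : Ob O & Ob (cob psi b)}.
Definition GHom (X Y : GOb) :=
  {beta : Hom (projT1 X) (projT1 Y) &
          Hom (projT2 X) (fobj (cmor psi beta) (projT2 Y))}.

Definition Gid (X : GOb) : GHom X X :=
  existT (fun beta => Hom (projT2 X) (fobj (cmor psi beta) (projT2 X)))
    (idm (projT1 X))
    (castT (esym (cmor_id_ob psi (projT2 X))) (idm (projT2 X))).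

(* (beta, f) o (gamma, g) = (beta gamma, gamma^* f o g) *)
Definition Gcmp (X Y Z : GOb) (F : GHom Y Z) (G : GHom X Y) : GHom X Z :=
  existT (fun beta => Hom (projT2 X) (fobj (cmor psi beta) (projT2 Z)))
    (cmp (projT1 F) (projT1 G))
    (castT (esym (cmor_cmp_ob psi (projT1 F) (projT1 G) (projT2 Z)))
       (cmp (fmap (cmor psi (projT1 G)) (projT2 F)) (projT2 G))).

Definition Ebar : Cat :=
  {| Ob := GOb; Hom := GHom; idm := Gid; cmp := Gcmp |}.

Definition Efun : Functor Ebar O :=
  @MkFunctor Ebar O (fun X : GOb => projT1 X)
     (fun (X Y : GOb) (F : GHom X Y) => projT1 F).

Lemma Efun_functor : is_functor Efun.
Proof. by split. Qed.

End Groth.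

Section Under.
Variables (O : Cat) (HO : is_cat O) (b : Ob O).

Definition UOb := {c : Ob O & Hom b c}.
Definition UHom (u v : UOb) :=
  {g : Hom (projT1 u) (projT1 v) | cmp g (projT2 u) = projT2 v}.

Lemma Uid_proof (u : UOb) : cmp (idm (projT1 u)) (projT2 u) = projT2 u.
Proof. by case: HO => _ [H _]; rewrite H. Qed.

Definition Uid (u : UOb) : UHom u u := exist _ (idm (projT1 u)) (Uid_proof u).

Lemma Ucmp_proof (u v w : UOb) (G : UHom v w) (H : UHom u v) :
  cmp (cmp (proj1_sig G) (proj1_sig H)) (projT2 u) = projT2 w.
Proof.
case: HO => _ [_ A]; rewrite -A (proj2_sig H); exact: (proj2_sig G).
Qed.

Definition Ucmp (u v w : UOb) (G : UHom v w) (H : UHom u v) : UHom u w :=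
  exist _ (cmp (proj1_sig G) (proj1_sig H)) (Ucmp_proof G H).

Definition Under : Cat := {| Ob := UOb; Hom := UHom; idm := Uid; cmp := Ucmp |}.

Definition Ufor : Functor Under O :=
  @MkFunctor Under O (fun u : UOb => projT1 u)
     (fun (u v : UOb) (g : UHom u v) => proj1_sig g).

Lemma Ufor_functor : is_functor Ufor.
Proof. by split. Qed.

End Under.

Section Pullback.
Variables (A B C : Cat) (p : Functor A C) (q : Functor B C)
  (hp : is_functor p) (hq : is_functor q).

Definition PbOb := {a : Ob A & {b : Ob B & fobj p a = fobj q b}}.
Definition PbHom (X Y : PbOb) :=
  {hk : (Hom (projT1 X) (projT1 Y) * Hom (projT1 (projT2 X)) (projT1 (projT2 Y)))%type
   | pk (fmap p hk.1) = pk (fmap q hk.2)}.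

Lemma Pbid_proof (X : PbOb) :
  pk (fmap p (idm (projT1 X))) = pk (fmap q (idm (projT1 (projT2 X)))).
Proof.
case: hp => -> _; case: hq => -> _.
case: X => a [b' e] /=; by rewrite e.
Qed.

Definition Pbid (X : PbOb) : PbHom X X :=
  exist _ (idm (projT1 X), idm (projT1 (projT2 X))) (Pbid_proof X).

Lemma Pbcmp_proof (X Y Z : PbOb) (G : PbHom Y Z) (H : PbHom X Y) :
  pk (fmap p (cmp (proj1_sig G).1 (proj1_sig H).1))
  = pk (fmap q (cmp (proj1_sig G).2 (proj1_sig H).2)).
Proof.
case: hp => _ ->; case: hq => _ ->.
exact: pk_cmp_congr (proj2_sig H) (proj2_sig G).
Qed.

Definition Pbcmp (X Y Z : PbOb) (G : PbHom Y Z) (H : PbHom X Y) : PbHom X Z :=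
  exist _ (cmp (proj1_sig G).1 (proj1_sig H).1, cmp (proj1_sig G).2 (proj1_sig H).2)
    (Pbcmp_proof G H).

Definition Pullback : Cat :=
  {| Ob := PbOb; Hom := PbHom; idm := Pbid; cmp := Pbcmp |}.

End Pullback.

Section Counit.
Variables (O : Cat) (HO : is_cat O) (psi : CFun O) (b : Ob O).

(* (F phi)(b) = pullback of  C -phi-> O <- b|O ;  here phi = E psi *)
Definition FE_at : Cat :=
  Pullback (Efun_functor psi) (Ufor_functor HO b).

(* an object: (x in psi(c)), (beta : b -> c'), c = c' ; sent to beta^* x *)
Definition cou_ob (X : Ob FE_at) : Ob (cob psi b) :=
  fobj (cmor psi (castT (esym (projT2 (projT2 X))) (projT2 (projT1 (projT2 X)))))
       (projT2 (projT1 X)).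

Lemma counit_hom_eq (c c' d d' : Ob O) (E : c = c') (E' : d = d')
  (beta : Hom b c') (beta' : Hom b d') (delta : Hom c d) (gamma : Hom c' d') :
  pk delta = pk gamma -> cmp gamma beta = beta' ->
  cmp delta (castT (esym E) beta) = castT (esym E') beta'.
Proof.
move: beta beta' gamma; subst c' d' => beta beta' gamma /= H <-.
rewrite /pk in H; apply inj_pair2 in H; apply inj_pair2 in H; by rewrite H.
Qed.

Lemma cou_eq (X Y : Ob FE_at) (H : Hom X Y) :
  fobj (cmor psi (castT (esym (projT2 (projT2 X))) (projT2 (projT1 (projT2 X)))))
    (fobj (cmor psi (projT1 (proj1_sig H).1)) (projT2 (projT1 Y)))
  = cou_ob Y.
Proof.
rewrite /cou_ob -cmor_cmp_ob.
rewrite (counit_hom_eq (projT2 (projT2 X)) (projT2 (projT2 Y)) (proj2_sig H)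
          (proj2_sig (proj1_sig H).2)).
by [].
Qed.

Definition cou_map (X Y : Ob FE_at) (H : Hom X Y) : Hom (cou_ob X) (cou_ob Y) :=
  castT (cou_eq H)
    (fmap (cmor psi (castT (esym (projT2 (projT2 X))) (projT2 (projT1 (projT2 X)))))
          (projT2 (proj1_sig H).1)).

Definition counit : Functor FE_at (cob psi b) :=
  @MkFunctor FE_at (cob psi b) cou_ob cou_map.

End Counit.

Definition monotone (m n : nat) (f : 'I_m.+1 -> 'I_n.+1) : Prop :=
  forall i j : 'I_m.+1, i <= j -> f i <= f j.
Definition mono (m n : nat) := {f : 'I_m.+1 -> 'I_n.+1 | monotone f}.

Definition mono_id (n : nat) : mono n n :=
  exist (@monotone n n) id (fun i j h => h).
Definition mono_comp (l m n : nat) (g : mono m n) (f : mono l m) : mono l n :=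
  exist (@monotone l n) (fun i => sval g (sval f i))
    (fun i j h => proj2_sig g _ _ (proj2_sig f _ _ h)).

Record sSet := MkS {
  sx : nat -> Type;
  sact : forall m n : nat, mono m n -> sx n -> sx m }.
Arguments sact s {m n} _ _.

Definition is_sset (X : sSet) : Prop :=
  (forall n (x : sx X n), sact X (mono_id n) x = x) /\
  (forall l m n (g : mono m n) (f : mono l m) (x : sx X n),
      sact X (mono_comp g f) x = sact X f (sact X g x)) /\
  (forall m n (f f' : mono m n), (forall i, sval f i = sval f' i) ->
      forall x : sx X n, sact X f x = sact X f' x).

Definition smap (X Y : sSet) := forall n, sx X n -> sx Y n.

Definition natural (X Y : sSet) (f : smap X Y) : Prop :=
  forall m n (a : mono m n) (x : sx X n), f m (sact X a x) = sact Y a (f n x).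

(* the m-simplices of the horn Lambda^{n+1}_k inside Delta[n+1] *)
Definition in_horn (n : nat) (k : 'I_n.+2) (m : nat) (a : mono m n.+1) : bool :=
  ~~ [forall j : 'I_n.+2, (j == k) || [exists i : 'I_m.+1, sval a i == j]].

Definition kan (K : sSet) : Prop :=
  forall (n : nat) (k : 'I_n.+2)
         (h : forall m (a : mono m n.+1), in_horn k a -> sx K m),
    (forall l m (a : mono m n.+1) (c : mono l m)
            (Ha : in_horn k a) (Hac : in_horn k (mono_comp a c)),
        h l (mono_comp a c) Hac = sact K c (h m a Ha)) ->
    exists y : sx K n.+1,
      forall m (a : mono m n.+1) (Ha : in_horn k a), sact K a y = h m a Ha.

Definition cyl (X : sSet) : sSet :=
  {| sx := fun n => (sx X n * mono n 1)%type;
     sact := fun m n (a : mono m n) (p : (sx X n * mono n 1)%type) =>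
               (sact X a p.1, mono_comp p.2 a) |}.

Definition mono_const (n : nat) (j : 'I_2) : mono n 1 :=
  exist (@monotone n 1) (fun _ => j) (fun _ _ _ => leqnn _).

Definition ehtpy (X K : sSet) (f g : smap X K) : Prop :=
  exists H : smap (cyl X) K, natural H /\
    (forall n (x : sx X n), H n (x, mono_const n ord0) = f n x) /\
    (forall n (x : sx X n), H n (x, mono_const n ord_max) = g n x).

Definition htpc (X K : sSet) : smap X K -> smap X K -> Prop :=
  clos_refl_sym_trans (smap X K) (@ehtpy X K).

(* weak equivalence: f^* : [Y,K] -> [X,K] bijective for every Kan complex K *)
Definition sweq (X Y : sSet) (f : smap X Y) : Prop :=
  forall K : sSet, is_sset K -> kan K ->
    (forall g : smap X K, natural g ->
       exists h : smap Y K, natural h /\ htpc (fun n x => h n (f n x)) g) /\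
    (forall h1 h2 : smap Y K, natural h1 -> natural h2 ->
       htpc (fun n x => h1 n (f n x)) (fun n x => h2 n (f n x)) -> htpc h1 h2).

Record NSimp (C : Cat) (n : nat) := MkNS {
  nob : 'I_n.+1 -> Ob C;
  nmor : forall i j : 'I_n.+1, i <= j -> Hom (nob i) (nob j);
  nmor_id : forall (i : 'I_n.+1) (h : i <= i), nmor h = idm (nob i);
  nmor_cmp : forall (i j k : 'I_n.+1) (hij : i <= j) (hjk : j <= k) (hik : i <= k),
      cmp (nmor hjk) (nmor hij) = nmor hik }.
Arguments nob {C n} s _ : rename.
Arguments nmor {C n} s i j _ : rename.

Definition NS_act (C : Cat) (m n : nat) (a : mono m n) (s : NSimp C n) : NSimp C m :=
  {| nob := fun i => nob s (sval a i);
     nmor := fun i j h => nmor s _ _ (proj2_sig a i j h);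
     nmor_id := fun i h => nmor_id s (proj2_sig a i i h);
     nmor_cmp := fun i j k hij hjk hik =>
       nmor_cmp s (proj2_sig a i j hij) (proj2_sig a j k hjk) (proj2_sig a i k hik) |}.

Definition nerve (C : Cat) : sSet := {| sx := NSimp C; sact := @NS_act C |}.

Section NerveMap.
Variables (C D : Cat) (F : Functor C D) (HF : is_functor F).

Lemma nmap_id n (s : NSimp C n) (i : 'I_n.+1) (h : i <= i) :
  fmap F (nmor s i i h) = idm (fobj F (nob s i)).
Proof. by rewrite nmor_id; case: HF. Qed.

Lemma nmap_cmp n (s : NSimp C n) (i j k : 'I_n.+1) hij hjk hik :
  cmp (fmap F (nmor s j k hjk)) (fmap F (nmor s i j hij)) = fmap F (nmor s i k hik).
Proof. by case: HF => _ <-; rewrite (nmor_cmp s hij hjk hik). Qed.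

Definition nmap : smap (nerve C) (nerve D) :=
  fun n (s : NSimp C n) =>
    {| nob := fun i => fobj F (nob s i);
       nmor := fun i j h => fmap F (nmor s i j h);
       nmor_id := @nmap_id n s;
       nmor_cmp := @nmap_cmp n s |}.
End NerveMap.

Definition weq_cat (C D : Cat) (F : Functor C D) : Prop :=
  exists HF : is_functor F, natural (nmap HF) /\ sweq (nmap HF).

(* The counit eps_b sends an object (x in psi(c), beta : b -> c) of (FE psi)(b)
   to beta^* x.  It has a strict section y |-> (y, id_b), and the morphisms
   (beta, id) : (beta^* x, id_b) -> (x, beta) form a natural transformation from
   section o eps_b to the identity.  A natural transformation induces a
   simplicial homotopy between the nerves (through N[1] = Delta[1]), so the
   nerve of eps_b is a homotopy equivalence and hence a weak equivalence. *)

From Stdlib Require Import Eqdep ProofIrrelevance FunctionalExtensionality Relation_Operators.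
From mathcomp Require Import all_boot.

Set Implicit Arguments.
Unset Strict Implicit.
Unset Printing Implicit Defensive.

Section CatLaws.
Variables (C : Cat) (HC : is_cat C).

Lemma cmp_idr (x y : Ob C) (f : Hom x y) : cmp f (idm x) = f.
Proof. by case: HC. Qed.

Lemma cmp_idl (x y : Ob C) (f : Hom x y) : cmp (idm y) f = f.
Proof. by case: HC => _ []. Qed.

Lemma cmpA (w x y z : Ob C) (f : Hom w x) (g : Hom x y) (h : Hom y z) :
  cmp h (cmp g f) = cmp (cmp h g) f.
Proof. by case: HC => _ [_]. Qed.

End CatLaws.

Section FunctorLaws.
Variables (C D : Cat) (F : Functor C D) (HF : is_functor F).

Lemma fmap_idm (x : Ob C) : fmap F (idm x) = idm (fobj F x).
Proof. by case: HF. Qed.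

Lemma fmap_cmp (x y z : Ob C) (g : Hom y z) (f : Hom x y) :
  fmap F (cmp g f) = cmp (fmap F g) (fmap F f).
Proof. by case: HF. Qed.

End FunctorLaws.

Definition Fid (C : Cat) : Functor C C := @MkFunctor C C id (fun _ _ f => f).

Definition Fcomp (C D E : Cat) (G : Functor D E) (F : Functor C D) : Functor C E :=
  @MkFunctor C E (fun x => fobj G (fobj F x)) (fun _ _ f => fmap G (fmap F f)).

Lemma Fid_functor (C : Cat) : is_functor (Fid C).
Proof. by split. Qed.

Lemma Fcomp_functor (C D E : Cat) (G : Functor D E) (F : Functor C D) :
  is_functor G -> is_functor F -> is_functor (Fcomp G F).
Proof.
move=> HG HF; split=> [x | x y z g f] /=.
- by rewrite (fmap_idm HF) (fmap_idm HG).
- by rewrite (fmap_cmp HF) (fmap_cmp HG).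
Qed.

Lemma pk_inj (C : Cat) (x y : Ob C) (f g : Hom x y) : pk f = pk g -> f = g.
Proof. by rewrite /pk => E; apply inj_pair2 in E; apply inj_pair2 in E. Qed.

Lemma pk_castT (C : Cat) (x y y' : Ob C) (e : y = y') (f : Hom x y) :
  pk (castT e f) = pk f.
Proof. by case: y' / e. Qed.

Lemma pk_fmap_congr (C D : Cat) (F : Functor C D) (x y x' y' : Ob C)
  (f : Hom x y) (f' : Hom x' y') :
  pk f = pk f' -> pk (fmap F f) = pk (fmap F f').
Proof.
rewrite /pk => E.
move: (projT1_eq E) => /= Ex; subst x'; apply inj_pair2 in E.
move: (projT1_eq E) => /= Ey; subst y'; apply inj_pair2 in E.
by subst f'.
Qed.

Lemma nsimp_ext (C : Cat) (n : nat) (s t : NSimp C n) :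
  (forall i, nob s i = nob t i) ->
  (forall (i j : 'I_n.+1) (h : i <= j), pk (nmor s i j h) = pk (nmor t i j h)) ->
  s = t.
Proof.
case: s => o1 m1 i1 c1; case: t => o2 m2 i2 c2 /= Eo Em.
have Eob : o1 = o2 by apply: functional_extensionality.
subst o2.
have Emor : m1 = m2.
  do 3!apply: functional_extensionality_dep => ?; exact: pk_inj.
subst m2; f_equal; exact: proof_irrelevance.
Qed.

Lemma GHom_eq (O : Cat) (psi : CFun O) (X Y : GOb psi) (F G : GHom X Y) :
  projT1 F = projT1 G -> pk (projT2 F) = pk (projT2 G) -> F = G.
Proof. by case: F G => [f1 f2] [g1 g2] /= E; subst g1 => /pk_inj ->. Qed.

Lemma UHom_eq (O : Cat) (b : Ob O) (u v : UOb b) (F G : UHom u v) :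
  proj1_sig F = proj1_sig G -> F = G.
Proof. by case: F G => [f pf] [g pg] /= E; subst g; rewrite (proof_irrelevance _ pf pg). Qed.

Lemma PbHom_eq (A B C : Cat) (p : Functor A C) (q : Functor B C) (X Y : PbOb p q)
  (F G : PbHom X Y) :
  (proj1_sig F).1 = (proj1_sig G).1 -> (proj1_sig F).2 = (proj1_sig G).2 -> F = G.
Proof.
case: F G => [[f1 f2] pf] [[g1 g2] pg] /= E1 E2; subst g1 g2.
by rewrite (proof_irrelevance _ pf pg).
Qed.

Lemma Under_cat (O : Cat) (HO : is_cat O) (b : Ob O) : is_cat (Under HO b).
Proof.
split; [|split] => *; apply: UHom_eq => /=.
- exact: cmp_idr.
- exact: cmp_idl.
- exact: cmpA.
Qed.

Lemma Pullback_cat (A B C : Cat) (p : Functor A C) (q : Functor B C)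
  (hp : is_functor p) (hq : is_functor q) :
  is_cat A -> is_cat B -> is_cat (Pullback hp hq).
Proof.
move=> HA HB; split; [|split] => *; apply: PbHom_eq => /=.
- exact: cmp_idr.
- exact: cmp_idr.
- exact: cmp_idl.
- exact: cmp_idl.
- exact: cmpA.
- exact: cmpA.
Qed.

Section CFunLaws.
Variables (O : Cat) (psi : CFun O) (Hpsi : is_cfun psi).

Lemma cob_cat (c : Ob O) : is_cat (cob psi c).
Proof. by case: Hpsi. Qed.

Lemma cmor_functor (c d : Ob O) (beta : Hom c d) : is_functor (cmor psi beta).
Proof. by case: Hpsi => _ []. Qed.

Lemma cmor_idm_pk (c : Ob O) (x y : Ob (cob psi c)) (f : Hom x y) :
  pk (fmap (cmor psi (idm c)) f) = pk f.
Proof. by case: Hpsi => _ [_ []]. Qed.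

Lemma cmor_cmp_pk (c d e : Ob O) (beta : Hom d e) (gamma : Hom c d)
  (x y : Ob (cob psi e)) (f : Hom x y) :
  pk (fmap (cmor psi (cmp beta gamma)) f)
  = pk (fmap (cmor psi gamma) (fmap (cmor psi beta) f)).
Proof. by case: Hpsi => _ [_ [_]]. Qed.

Lemma Ebar_cat : is_cat O -> is_cat (Ebar psi).
Proof.
move=> HO; split; [|split].
- move=> X Y [? f]; apply: GHom_eq => /=; first exact: cmp_idr.
  rewrite pk_castT -[in RHS](cmp_idr (cob_cat _) f).
  apply: pk_cmp_congr; [exact: pk_castT | exact: cmor_idm_pk].
- move=> X Y [? f]; apply: GHom_eq => /=; first exact: cmp_idl.
  rewrite pk_castT -[in RHS](cmp_idl (cob_cat _) f).
  apply: pk_cmp_congr => //.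
  by rewrite (pk_fmap_congr _ (pk_castT _ _)) (fmap_idm (cmor_functor _)).
- move=> W X Y Z [delta f] [gamma g] [? h]; apply: GHom_eq => /=.
    exact: cmpA.
  rewrite !pk_castT.
  transitivity (pk (cmp (fmap (cmor psi delta) (fmap (cmor psi gamma) h))
                       (cmp (fmap (cmor psi delta) g) f))).
    apply: pk_cmp_congr; [exact: pk_castT | exact: cmor_cmp_pk].
  rewrite (cmpA (cob_cat _)); apply: pk_cmp_congr => //.
  by rewrite (pk_fmap_congr _ (pk_castT _ _)) (fmap_cmp (cmor_functor _)).
Qed.

End CFunLaws.

Lemma nmap_natural (C D : Cat) (F : Functor C D) (HF : is_functor F) :
  natural (nmap HF).
Proof. by move=> m n a x; apply: nsimp_ext. Qed.

Lemma nmap_Fid (C : Cat) : nmap (Fid_functor C) = (fun n x => x).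
Proof.
by apply: functional_extensionality_dep => n; apply: functional_extensionality => x;
  apply: nsimp_ext.
Qed.

Lemma nmap_Fcomp (C D E : Cat) (G : Functor D E) (F : Functor C D)
  (HG : is_functor G) (HF : is_functor F) :
  nmap (Fcomp_functor HG HF) = (fun n x => nmap HG (nmap HF x)).
Proof.
by apply: functional_extensionality_dep => n; apply: functional_extensionality => x;
  apply: nsimp_ext.
Qed.

Section NatTransHomotopy.
Variables (C D : Cat) (HD : is_cat D) (F0 F1 : Functor C D)
  (HF0 : is_functor F0) (HF1 : is_functor F1)
  (eta : forall x, Hom (fobj F0 x) (fobj F1 x))
  (eta_natural : forall x y (f : Hom x y),
      cmp (fmap F1 f) (eta x) = cmp (eta y) (fmap F0 f)).

Definition Fsel (c : bool) := if c then F1 else F0.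

(* The functor [1] x C -> D determined by eta, on a morphism (c -> c', f). *)
Definition cyl_hom (c c' : bool) :
  c ==> c' -> forall u v : Ob C, Hom u v -> Hom (fobj (Fsel c) u) (fobj (Fsel c') v) :=
  match c, c' with
  | true, true => fun _ _ _ f => fmap F1 f
  | false, true => fun _ _ v f => cmp (eta v) (fmap F0 f)
  | false, false => fun _ _ _ f => fmap F0 f
  | true, false => fun H => False_rect _ (notF H)
  end.

Lemma cyl_hom_idm (c : bool) (H : c ==> c) (u : Ob C) : cyl_hom H (idm u) = idm _.
Proof. by case: c H => H /=; rewrite fmap_idm. Qed.

Lemma cyl_hom_cmp (c1 c2 c3 : bool) (H12 : c1 ==> c2) (H23 : c2 ==> c3)
  (H13 : c1 ==> c3) (u v w : Ob C) (f : Hom u v) (g : Hom v w) :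
  cmp (cyl_hom H23 g) (cyl_hom H12 f) = cyl_hom H13 (cmp g f).
Proof.
case: c1 c2 c3 H12 H23 H13 => [] [] [] //= *.
- by rewrite (fmap_cmp HF1).
- by rewrite (cmpA HD) eta_natural -(cmpA HD) (fmap_cmp HF0).
- by rewrite -(cmpA HD) (fmap_cmp HF0).
- by rewrite (fmap_cmp HF0).
Qed.

Lemma mono1_implyb (m : nat) (p : mono m 1) (i j : 'I_m.+1) :
  i <= j -> (0 < sval p i) ==> (0 < sval p j).
Proof. by move=> ij; apply/implyP => /leq_trans; apply; exact: (proj2_sig p). Qed.

Section CylSimplex.
Variables (n : nat) (x : NSimp C n) (p : mono n 1).

Definition cyl_ob (i : 'I_n.+1) := fobj (Fsel (0 < sval p i)) (nob x i).

Definition cyl_mor (i j : 'I_n.+1) (h : i <= j) : Hom (cyl_ob i) (cyl_ob j) :=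
  cyl_hom (mono1_implyb p h) (nmor x i j h).

Lemma cyl_mor_id (i : 'I_n.+1) (h : i <= i) : cyl_mor h = idm (cyl_ob i).
Proof. by rewrite /cyl_mor nmor_id cyl_hom_idm. Qed.

Lemma cyl_mor_cmp (i j k : 'I_n.+1) (hij : i <= j) (hjk : j <= k) (hik : i <= k) :
  cmp (cyl_mor hjk) (cyl_mor hij) = cyl_mor hik.
Proof. by rewrite /cyl_mor -(nmor_cmp x hij hjk hik); exact: cyl_hom_cmp. Qed.

Definition cyl_simplex : NSimp D n := MkNS cyl_mor_id cyl_mor_cmp.

End CylSimplex.

Definition nat_trans_htpy : smap (cyl (nerve C)) (nerve D) :=
  fun n q => cyl_simplex q.1 q.2.

Lemma nat_trans_ehtpy : ehtpy (nmap HF0) (nmap HF1).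
Proof.
exists nat_trans_htpy; split; last by split=> n x; apply: nsimp_ext.
move=> m n a [x p]; apply: nsimp_ext => //= i j h.
by rewrite /cyl_mor /=; congr (pk (cyl_hom _ _)); exact: eq_irrelevance.
Qed.

End NatTransHomotopy.

Lemma ehtpy_precomp (X Y K : sSet) (s : smap Y X) (u v : smap X K) : natural s ->
  ehtpy u v -> ehtpy (fun n y => u n (s n y)) (fun n y => v n (s n y)).
Proof.
move=> Ns [H [NH [H0 H1]]]; exists (fun n q => H n (s n q.1, q.2)); split.
- by move=> m n a [y p] /=; rewrite Ns; exact: (NH m n a (s n y, p)).
- by split=> n y /=; rewrite ?H0 ?H1.
Qed.

Lemma htpc_precomp (X Y K : sSet) (s : smap Y X) (u v : smap X K) : natural s ->
  htpc u v -> htpc (fun n y => u n (s n y)) (fun n y => v n (s n y)).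
Proof.
move=> Ns; elim=> {u v} [u v /(ehtpy_precomp Ns) | u | u v _ | u v w _ IHuv _ IHvw].
- exact: rst_step.
- exact: rst_refl.
- exact: rst_sym.
- exact: rst_trans IHuv IHvw.
Qed.

Lemma ehtpy_postcomp (X Y K : sSet) (g : smap X K) (u v : smap Y X) : natural g ->
  ehtpy u v -> ehtpy (fun n y => g n (u n y)) (fun n y => g n (v n y)).
Proof.
move=> Ng [H [NH [H0 H1]]]; exists (fun n q => g n (H n q)); split.
- by move=> m n a q; rewrite NH Ng.
- by split=> n y; rewrite ?H0 ?H1.
Qed.

Lemma sweq_of_homotopy_section (X Y : sSet) (f : smap X Y) (s : smap Y X) :
  natural s -> (forall n y, f n (s n y) = y) ->
  ehtpy (fun n x => s n (f n x)) (fun n x => x) -> sweq f.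
Proof.
move=> Ns fs sf_id K _ _; split.
- move=> g Ng; exists (fun n y => g n (s n y)); split.
    by move=> m n a y; rewrite Ns Ng.
  exact/rst_step/(ehtpy_postcomp Ng sf_id).
- move=> h1 h2 _ _ /(htpc_precomp Ns).
  have fsK (h : smap Y K) : (fun n y => h n (f n (s n y))) = h.
    apply: functional_extensionality_dep => n.
    by apply: functional_extensionality => y; rewrite fs.
  by rewrite !fsK.
Qed.

Section Counit.
Variables (O : Cat) (HO : is_cat O) (psi : CFun O) (Hpsi : is_cfun psi) (b : Ob O).

Notation FE := (FE_at HO psi b).

Lemma FE_cat : is_cat FE.
Proof. exact: Pullback_cat (Ebar_cat Hpsi HO) (Under_cat HO b). Qed.

Definition under_arrow (X : Ob FE) : Hom b (projT1 (projT1 X)) :=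
  castT (esym (projT2 (projT2 X))) (projT2 (projT1 (projT2 X))).

Lemma under_arrow_cmp (X Y : Ob FE) (F : Hom X Y) :
  cmp (projT1 (sval F).1) (under_arrow X) = under_arrow Y.
Proof.
exact: (counit_hom_eq (projT2 (projT2 X)) (projT2 (projT2 Y))
                      (proj2_sig F) (proj2_sig (sval F).2)).
Qed.

Lemma counit_functor : is_functor (counit HO psi b).
Proof.
split=> [X | X Y Z G F]; apply: pk_inj; rewrite /= /cou_map pk_castT /=.
  by rewrite (pk_fmap_congr _ (pk_castT _ _)) (fmap_idm (cmor_functor Hpsi _)).
rewrite (pk_fmap_congr _ (pk_castT _ _)) (fmap_cmp (cmor_functor Hpsi _)).
apply: pk_cmp_congr; first by rewrite pk_castT.
rewrite pk_castT -(cmor_cmp_pk Hpsi).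
by rewrite -[castT _ _]/(under_arrow X) under_arrow_cmp.
Qed.

Definition section_ob (y : Ob (cob psi b)) : Ob FE :=
  existT _ (existT _ b y) (existT _ (existT _ b (idm b)) (erefl b)).

Definition section_mor (y y' : Ob (cob psi b)) (f : Hom y y') :
  Hom (section_ob y) (section_ob y') :=
  exist _ ((existT _ (idm b) (castT (esym (cmor_id_ob psi y')) f)
             : @GHom O psi (existT _ b y) (existT _ b y')),
           Uid HO (existT _ b (idm b)))
    (erefl _).

Definition counit_section : Functor (cob psi b) FE :=
  @MkFunctor (cob psi b) FE section_ob section_mor.

Lemma counit_section_functor : is_functor counit_section.
Proof.
split=> [y | y y' y'' g f]; apply: PbHom_eq => //=.
- apply: GHom_eq => /=; first by rewrite (cmp_idl HO).
  rewrite !pk_castT; apply: pk_cmp_congr; first by rewrite pk_castT.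
  by rewrite (pk_fmap_congr _ (pk_castT _ _)) (cmor_idm_pk Hpsi).
- by apply: UHom_eq => /=; rewrite (cmp_idl HO).
Qed.

Lemma nmap_counit_section (n : nat) (y : NSimp (cob psi b) n) :
  nmap counit_functor (nmap counit_section_functor y) = y.
Proof.
apply: nsimp_ext => /= [i | i j h]; first exact: cmor_id_ob.
rewrite /cou_map pk_castT /= (pk_fmap_congr _ (pk_castT _ _)).
exact: (cmor_idm_pk Hpsi).
Qed.

Definition section_counit_to_id (X : Ob FE) :
  Hom (fobj (Fcomp counit_section (counit HO psi b)) X) (fobj (Fid FE) X) :=
  exist _ ((existT _ (under_arrow X) (idm (cou_ob X))
             : @GHom O psi (existT _ b (cou_ob X)) (projT1 X)),
           (exist _ (projT2 (projT1 (projT2 X))) (cmp_idr HO _)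
             : UHom (existT _ b (idm b)) (projT1 (projT2 X))))
    (pk_castT _ _).

Lemma section_counit_to_id_natural (X Y : Ob FE) (f : Hom X Y) :
  cmp (fmap (Fid FE) f) (section_counit_to_id X)
  = cmp (section_counit_to_id Y) (fmap (Fcomp counit_section (counit HO psi b)) f).
Proof.
apply: PbHom_eq => /=.
- apply: GHom_eq => /=; first by rewrite (cmp_idr HO) under_arrow_cmp.
  rewrite !pk_castT (cmp_idr (cob_cat Hpsi _)) (fmap_idm (cmor_functor Hpsi _)).
  by rewrite (cmp_idl (cob_cat Hpsi _)) !pk_castT.
- by apply: UHom_eq => /=; rewrite (cmp_idr HO); exact: (proj2_sig (sval f).2).
Qed.

End Counit.

Theorem proposition3p4 (O : Cat) (HO : is_cat O) (psi : CFun O) :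
  is_cfun psi -> forall b : Ob O, weq_cat (counit HO psi b).
Proof.
move=> Hpsi b.
pose Hcou := counit_functor HO Hpsi b.
pose Hsec := counit_section_functor HO Hpsi b.
exists Hcou; split; first exact: nmap_natural.
apply: (sweq_of_homotopy_section (nmap_natural Hsec)).
  exact: nmap_counit_section.
have := nat_trans_ehtpy (FE_cat HO Hpsi b) (Fcomp_functor Hsec Hcou) (Fid_functor _)
          (@section_counit_to_id_natural O HO psi Hpsi b).
by rewrite nmap_Fcomp nmap_Fid.
Qed.
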